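(* Let $A<\mathbb{R}$ be any subring and let $p\in\mathbb{P}^1\setminus\{\infty\}$. Then $\mathrm{PSL}_2(A)\cdot p\subseteq\{\infty\}\cup H(A)\cdot p$. Consequently, the orbit equivalence relations induced by the actions of $\mathrm{PSL}_2(A)$ and of $H(A)$ on $\mathbb{P}^1$ coincide when restricted to $\mathbb{P}^1\setminus\{\infty\}$.
   Context: Let $\mathbb{P}^1=\mathbb{P}^1(\mathbb{R})$ with its usual topology (a circle) and the natural action of $\mathrm{PSL}_2(\mathbb{R})$. Let $G$ be the group of homeomorphisms of $\mathbb{P}^1$ which are piecewise in $\mathrm{PSL}_2(\mathbb{R})$ with finitely many pieces, each an interval. Let $\infty\in\mathbb{P}^1$ correspond to the first basis vector of $\mathbb{R}^2$ and $H<G$ its stabilizer. For a subring $A<\mathbb{R}$, $P_A$ is the set of fixed points of hyperbolic elements (trace of absolute value $>2$) of $\mathrm{PSL}_2(A)$, $G(A)$ is the subgroup of $G$ of elements piecewise in $\mathrm{PSL}_2(A)$ with all interval endpoints in $P_A$, and $H(A)=G(A)\cap H$. *)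

From HB Require Import structures.
From mathcomp Require Import all_boot all_order all_algebra.
From mathcomp Require Import reals.
Set Implicit Arguments. Unset Strict Implicit. Unset Printing Implicit Defensive.
Import Order.TTheory GRing.Theory Num.Theory.
Local Open Scope ring_scope.

(* P^1(R) = R ∪ {∞}: [Some x] is the line [x:1], [None] is ∞ = [1:0]
   (the line of the first basis vector). *)
Definition P1 (R : realType) := option R.

Section Defs.
Variable R : realType.

Definition ent11 (M : 'M[R]_2) := M ord0 ord0.
Definition ent12 (M : 'M[R]_2) := M ord0 ord_max.
Definition ent21 (M : 'M[R]_2) := M ord_max ord0.
Definition ent22 (M : 'M[R]_2) := M ord_max ord_max.

(* Action of a 2x2 matrix on P^1 (projectivised linear action on column
   vectors): [x:y] |-> [a x + b y : c x + d y]. *)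
Definition mob (M : 'M[R]_2) (x : P1 R) : P1 R :=
  match x with
  | Some r => let den := ent21 M * r + ent22 M in
              if den == 0 then None else Some ((ent11 M * r + ent12 M) / den)
  | None => if ent21 M == 0 then None else Some (ent11 M / ent21 M)
  end.

(* SL_2(A): matrices with entries in A and determinant 1.  PSL_2(A) acts on
   P^1 through SL_2(A) (the action of M and -M coincide). *)
Definition inSL2 (A : {pred R}) (M : 'M[R]_2) : Prop :=
  (forall i j, M i j \in A) /\ \det M = 1.

Definition inPA (A : {pred R}) (x : P1 R) : Prop :=
  exists M, inSL2 A M /\ 2 < `|\tr M| /\ mob M x = x.

(* The cyclic order of the circle P^1, cut at ∞ (∞ is the largest point). *)
Definition P1lt (x y : P1 R) : bool :=
  match x, y with
  | Some r, Some s => r < s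
  | Some _, None => true
  | None, _ => false
  end.
Definition P1le (x y : P1 R) : bool := (x == y) || P1lt x y.

(* x lies in the closed arc of the circle going in the positive direction
   from a to b; for a = b this is the whole circle. *)
Definition in_arc (a b x : P1 R) : bool :=
  if a == b then true
  else if P1lt a b then P1le a x && P1le x b
  else P1le a x || P1le x b.

(* The breakpoints are
   listed in increasing (cyclic) order s_0 < ... < s_{k-1}; the pieces are the
   closed arcs [s_i, s_{i+1}] (indices mod k). *)
Definition piecewise_A (A : {pred R}) (f : P1 R -> P1 R) : Prop :=
  exists s : seq (P1 R),
    sorted P1lt s /\ (forall t, t \in s -> inPA A t) /\
    (if s is [::] then exists M, inSL2 A M /\ forall x, f x = mob M x
     else forall i, (i < size s)%N ->
       exists M, inSL2 A M /\
         forall x, in_arc (nth None s i) (nth None s ((i.+1) %% size s)) x ->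
                   f x = mob M x).

(* Since the pieces are finitely many closed arcs on each of which f agrees
   with a (continuous) projective map, f is automatically continuous, and a
   continuous bijection of the circle is a homeomorphism. *)
Definition in_GA (A : {pred R}) (f : P1 R -> P1 R) : Prop :=
  bijective f /\ piecewise_A A f.

Definition in_HA (A : {pred R}) (f : P1 R -> P1 R) : Prop :=
  in_GA A f /\ f None = None.

End Defs.

From HB Require Import structures.
From mathcomp Require Import all_boot all_order all_algebra.
From mathcomp Require Import reals ring lra.
Import Order.TTheory GRing.Theory Num.Theory.
Set Implicit Arguments. Unset Strict Implicit. Unset Printing Implicit Defensive.
Local Open Scope ring_scope.

(* Let M = [[a, b], [c, d]] be in SL_2(A) with c > 0 and M p <> ∞.  Multiplying M on
   the left by a translation T^-n (n an integer) keeps its lower row and shifts its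
   fixed-point polynomial c y^2 + (d - a) y - b by n (c p + d), so for a suitable n
   the fixed-point polynomial of N = T^-n M is negative at p; then N is hyperbolic and
   p lies on the arc between its two fixed points where that polynomial is nonpositive.  The map equal
   to N on this arc and to the identity elsewhere is a piecewise projective
   homeomorphism fixing ∞ with breakpoints in P_A, and composing it with T^n gives an
   element of H(A) sending p to M p.  For c < 0 replace M by -M, and for c = 0 the
   map M itself lies in H(A).  Conversely, every element of H(A) agrees at each point
   with some element of PSL_2(A). *)

Section CircleOrder.
Variable R : realType.
Implicit Types (x y a b : P1 R) (s : seq (P1 R)).

Lemma P1lt_trans : transitive (@P1lt R).
Proof. by case=> [?|] [?|] [?|] //=; apply: lt_trans. Qed.

Lemma P1lt_irr x : P1lt x x = false.
Proof. by case: x => //= ?; rewrite ltxx. Qed.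

Lemma P1leNgt x y : P1le x y = ~~ P1lt y x.
Proof. by case: x y => [r|] [t|] //=; rewrite /P1le /= -le_eqVlt leNgt. Qed.

Lemma P1leSS (r t : R) : P1le (Some r) (Some t) = (r <= t).
Proof. by rewrite /P1le /= le_eqVlt. Qed.

Lemma P1ltW x y : P1lt x y -> P1le x y.
Proof. by rewrite /P1le => ->; rewrite orbT. Qed.

Lemma in_arc_lt a b x : P1lt a b -> in_arc a b x = P1le a x && P1le x b.
Proof.
by move=> lt_ab; rewrite /in_arc lt_ab; case: eqP => // eq_ab; rewrite eq_ab P1lt_irr in lt_ab.
Qed.

Lemma in_arc_gt a b x : P1lt b a -> in_arc a b x = P1le a x || P1le x b.
Proof.
move=> lt_ba; have /negbTE nlt_ab : ~~ P1lt a b by rewrite -P1leNgt P1ltW.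
by rewrite /in_arc nlt_ab; case: eqP => // eq_ab; rewrite eq_ab P1lt_irr in lt_ba.
Qed.

Lemma sorted_arcs_cover s x : sorted (@P1lt R) s -> s != [::] ->
  exists2 i, (i < size s)%N &
    in_arc (nth None s i) (nth None s (i.+1 %% size s)) x.
Proof.
case: s => [//|a t] /= sorted_s _; set j := find (P1le x) (a :: t).
case: (boolP ((0 < j)%N && (j <= size t)%N)) => [/andP [j_gt0 j_le] | j_out].
  exists j.-1; first by rewrite /= ltnS (leq_trans (leq_pred j)).
  rewrite prednK // modn_small ?ltnS // in_arc_lt; last first.
    by rewrite -[in X in P1lt _ X](prednK j_gt0); apply/(pathP None sorted_s); rewrite prednK.
  have x_le : P1le x (nth None (a :: t) j) by apply: nth_find; rewrite has_find ltnS.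
  rewrite x_le andbT P1ltW //; apply/negbNE; rewrite -P1leNgt.
  by rewrite (before_find _ (_ : j.-1 < j)%N) // ltn_predL.
exists (size t) => //; rewrite modnn -[X in nth _ _ X]/((size (a :: t)).-1) nth_last /=.
have x_side : P1le x a || P1lt (last a t) x.
  move: j_out; rewrite negb_and -eqn0Ngt -ltnNge => /orP [/eqP j0 | size_lt_j].
    by have := @nth_find _ None (P1le x) (a :: t); rewrite -/j j0 has_find -/j j0 /= => /(_ isT) ->.
  apply/orP; right; apply/negbNE; rewrite -P1leNgt.
  have := @before_find _ None (P1le x) (a :: t) (size t) size_lt_j.
  by rewrite -[X in nth _ _ X]/((size (a :: t)).-1) nth_last => ->.
clear j_out j; case: t sorted_s x_side => [|b t] sorted_s x_side; first by rewrite /in_arc eqxx.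
have a_lt_last : P1lt a (last b t).
  by apply: (allP (order_path_min P1lt_trans sorted_s)); rewrite mem_last.
by rewrite in_arc_gt //; case/orP: x_side => [-> | /P1ltW ->]; rewrite ?orbT.
Qed.

End CircleOrder.

Section Mobius.
Variable R : realType.
Implicit Types (M N : 'M[R]_2) (x : P1 R) (a b c d n y : R).

Definition mk2 a b c d : 'M[R]_2 :=
  \matrix_(i, j) if i == ord0 then (if j == ord0 then a else b)
                 else (if j == ord0 then c else d).

Lemma ent11_mk2 a b c d : ent11 (mk2 a b c d) = a. Proof. by rewrite /ent11 mxE. Qed.
Lemma ent12_mk2 a b c d : ent12 (mk2 a b c d) = b. Proof. by rewrite /ent12 mxE. Qed.
Lemma ent21_mk2 a b c d : ent21 (mk2 a b c d) = c. Proof. by rewrite /ent21 mxE. Qed.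
Lemma ent22_mk2 a b c d : ent22 (mk2 a b c d) = d. Proof. by rewrite /ent22 mxE. Qed.
Definition ent_mk2 := (ent11_mk2, ent12_mk2, ent21_mk2, ent22_mk2).

Lemma ord2P (i : 'I_2) : i = ord0 \/ i = ord_max.
Proof. by case: i => [[|[|//]] ?]; [left | right]; apply: val_inj. Qed.

Lemma mk2_ent M : mk2 (ent11 M) (ent12 M) (ent21 M) (ent22 M) = M.
Proof. by apply/matrixP => i j; rewrite mxE; case: (ord2P i) (ord2P j) => -> [] ->. Qed.

Lemma det2E M : \det M = ent11 M * ent22 M - ent12 M * ent21 M.
Proof.
rewrite (expand_det_row _ ord0) !big_ord_recr big_ord0 /= add0r /cofactor !det_mx11 !mxE.
have -> : widen_ord (leqnSn 1) ord_max = ord0 :> 'I_2 by apply: val_inj.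
have -> : lift ord0 (0 : 'I_1) = ord_max :> 'I_2 by apply: val_inj.
have -> : lift ord_max (0 : 'I_1) = ord0 :> 'I_2 by apply: val_inj.
by rewrite /ent11 /ent12 /ent21 /ent22 /= expr0 expr1 mul1r mulN1r mulrN.
Qed.

Lemma tr2E M : \tr M = ent11 M + ent22 M.
Proof.
rewrite /mxtrace big_ord_recr big_ord1 /=.
by have -> : widen_ord (leqnSn 1) ord0 = ord0 :> 'I_2 by apply: val_inj.
Qed.

Lemma mulmx2E M N : M *m N =
  mk2 (ent11 M * ent11 N + ent12 M * ent21 N) (ent11 M * ent12 N + ent12 M * ent22 N)
      (ent21 M * ent11 N + ent22 M * ent21 N) (ent21 M * ent12 N + ent22 M * ent22 N).
Proof.
apply/matrixP => i j; rewrite !mxE big_ord_recr big_ord1 /=.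
have -> : widen_ord (leqnSn 1) ord0 = ord0 :> 'I_2 by apply: val_inj.
by case: (ord2P i) (ord2P j) => -> [] ->.
Qed.

Lemma adj2E M : \adj M = mk2 (ent22 M) (- ent12 M) (- ent21 M) (ent11 M).
Proof.
have lift0 : lift ord0 (0 : 'I_1) = ord_max :> 'I_2 by apply: val_inj.
have lift1 : lift ord_max (0 : 'I_1) = ord0 :> 'I_2 by apply: val_inj.
apply/matrixP => i j; rewrite !mxE /cofactor det_mx11 !mxE.
case: (ord2P i) (ord2P j) => -> [] ->; rewrite ?lift0 ?lift1 /=.
all: by rewrite /ent11 /ent12 /ent21 /ent22; ring.
Qed.

Lemma adj2K M : \adj (\adj M) = M.
Proof. by rewrite !adj2E !ent_mk2 !opprK mk2_ent. Qed.

Lemma det_adj2 M : \det (\adj M) = \det M.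
Proof. by rewrite adj2E !det2E !ent_mk2; ring. Qed.

Definition mob_den M y := ent21 M * y + ent22 M.
Definition mobR M y := (ent11 M * y + ent12 M) / mob_den M y.

(* [mob M (Some y) = Some y] iff [fixpoly M y = 0], away from the pole of [M]. *)
Definition fixpoly M y := ent21 M * y ^+ 2 + (ent22 M - ent11 M) * y - ent12 M.

Lemma mobS M y : mob_den M y != 0 -> mob M (Some y) = Some (mobR M y).
Proof. by rewrite /= /mobR /mob_den => /negbTE ->. Qed.

Lemma mob_fixpoly0 M y : mob_den M y != 0 -> fixpoly M y = 0 -> mob M (Some y) = Some y.
Proof.
move=> den_neq0 fix0; rewrite mobS //; congr Some; apply: (canLR (mulfK den_neq0)).
by move: fix0; rewrite /fixpoly /mob_den => /eqP; rewrite -subr_eq0 => /eqP; lra.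
Qed.

Lemma mob_den_adj M y : \det M = 1 ->
  mob_den M y * mob_den (\adj M) y = 1 - ent21 M * fixpoly M y.
Proof. by rewrite /mob_den /fixpoly adj2E !ent_mk2 det2E => <-; ring. Qed.

Lemma fixpoly_adj M y : fixpoly (\adj M) y = - fixpoly M y.
Proof. by rewrite /fixpoly adj2E !ent_mk2; ring. Qed.

(* Invariance of the binary quadratic form [c X^2 + (d - a) X Y - b Y^2] under [M]. *)
Lemma fixpoly_mobR M y : \det M = 1 -> mob_den M y != 0 ->
  fixpoly M (mobR M y) = fixpoly M y / mob_den M y ^+ 2.
Proof.
move=> det1 den_neq0; rewrite -[fixpoly M y]mul1r -det1 det2E /fixpoly /mobR.
by move: den_neq0; rewrite /mob_den => den_neq0; field.
Qed.

Lemma mob_adjK M : \det M = 1 -> cancel (mob M) (mob (\adj M)).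
Proof.
rewrite det2E => det1 [y|] /=; last first.
  case: eqP => [c0 | /eqP c_neq0]; rewrite /= adj2E !ent_mk2 ?c0 ?oppr0 ?eqxx //.
  by rewrite mulNr mulrC mulfVK // addNr eqxx.
case: eqP => [den0 | /eqP den_neq0] /=; rewrite adj2E !ent_mk2.
  have c_neq0 : ent21 M != 0.
    by apply: contra_eq_neq det1 => c0; move: den0; rewrite c0 mul0r add0r => ->; lra.
  rewrite oppr_eq0 (negbTE c_neq0); congr Some.
  have -> : ent22 M = - (ent21 M * y) by lra.
  by field.
have den'E : - ent21 M * ((ent11 M * y + ent12 M) / (ent21 M * y + ent22 M)) + ent11 M
    = 1 / (ent21 M * y + ent22 M) by rewrite -det1; field.
rewrite den'E ifF ?div1r ?invr_eq0 ?(negbTE den_neq0) //; congr Some.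
by rewrite -[in RHS](mul1r y) -det1; field.
Qed.

Lemma mob_bij M : \det M = 1 -> bijective (mob M).
Proof.
move=> det1; exists (mob (\adj M)); first exact: mob_adjK.
by rewrite -{2}(adj2K M); apply: mob_adjK; rewrite det_adj2.
Qed.

Lemma mob_opp M x : mob (- M) x = mob M x.
Proof.
rewrite /mob /ent11 /ent12 /ent21 /ent22 !mxE; case: x => [y|].
  by rewrite !mulNr -opprD oppr_eq0 -opprD invrN mulrNN.
by rewrite oppr_eq0 invrN mulrNN.
Qed.

Lemma mob1 x : mob 1%:M x = x.
Proof.
case: x => [y|]; rewrite /mob /ent11 /ent12 /ent21 /ent22 !mxE /= ?eqxx //.
by rewrite mul0r add0r oner_eq0 mul1r addr0 divr1.
Qed.

Definition shiftmx n := mk2 1 n 0 1.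
Definition shiftP1 n : P1 R -> P1 R := omap (fun y => y + n).

Lemma shiftmxM n M : shiftmx n *m M =
  mk2 (ent11 M + n * ent21 M) (ent12 M + n * ent22 M) (ent21 M) (ent22 M).
Proof. by rewrite mulmx2E !ent_mk2 !mul1r !mul0r !add0r. Qed.

Lemma shiftmx_add m n : shiftmx m *m shiftmx n = shiftmx (m + n).
Proof. by rewrite shiftmxM !ent_mk2 /shiftmx mulr0 addr0 mulr1 addrC. Qed.

Lemma shiftmx0 : shiftmx 0 = 1%:M.
Proof. by apply/matrixP => i j; rewrite !mxE; case: (ord2P i) (ord2P j) => -> [] ->. Qed.

Lemma mob_shiftmxM n M x : mob (shiftmx n *m M) x = shiftP1 n (mob M x).
Proof.
rewrite shiftmxM /mob !ent_mk2; case: x => [y|]; case: eqP => //= den_neq0.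
  by congr Some; field; apply/eqP.
by congr Some; field; apply/eqP.
Qed.

Lemma fixpoly_shiftmxM n M y : fixpoly (shiftmx n *m M) y = fixpoly M y - n * mob_den M y.
Proof. by rewrite /fixpoly /mob_den shiftmxM !ent_mk2; ring. Qed.

Lemma mul_fixpoly_trace M y :
  ent21 M * fixpoly M y = mob_den M y ^+ 2 - \tr M * mob_den M y + \det M.
Proof. by rewrite /fixpoly /mob_den tr2E det2E; ring. Qed.

Lemma hyperbolic_of_fixpoly M y : \det M = 1 -> ent21 M * fixpoly M y < 0 ->
  2 < `|\tr M|.
Proof.
rewrite mul_fixpoly_trace => ->; set w := mob_den M y; set t := \tr M => Qw_lt0.
have tw_le : t * w <= `|t| * `|w| by rewrite -normrM ler_norm.
have w2 : w ^+ 2 = `|w| ^+ 2 by rewrite real_normK ?num_real.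
have := sqr_ge0 (`|w| - 1); have := normr_ge0 w; have := normr_ge0 t.
nra.
Qed.

Definition fixarc M y : bool := ent21 M * fixpoly M y <= 0.

(* When [M] is hyperbolic and [ent21 M > 0], [fixarc M] is the closed arc between the
   two fixed points of [M]; [mob_fixarc M] acts as [M] on it and as the identity elsewhere. *)
Definition mob_fixarc M x : P1 R :=
  if x is Some y then (if fixarc M y then mob M x else x) else x.

Lemma fixarc_den M y : \det M = 1 -> fixarc M y -> mob_den M y != 0.
Proof.
move=> det1 arc_y; apply: contraTneq isT => den0.
by have := mob_den_adj y det1; rewrite den0 mul0r; move: arc_y; rewrite /fixarc; lra.
Qed.

Lemma fixarc_adj M : fixarc (\adj M) =1 fixarc M.
Proof. by move=> y; rewrite /fixarc fixpoly_adj adj2E ent_mk2 mulrNN. Qed.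

Lemma fixarc_mobR M y : \det M = 1 -> fixarc M y -> fixarc M (mobR M y).
Proof.
move=> det1 arc_y; rewrite /fixarc fixpoly_mobR ?fixarc_den // mulrA.
by rewrite mulr_le0_ge0 // invr_ge0 sqr_ge0.
Qed.

Lemma mob_fixarcS M y :
  mob_fixarc M (Some y) = if fixarc M y then mob M (Some y) else Some y.
Proof. by []. Qed.

Lemma mob_fixarcK M : \det M = 1 -> cancel (mob_fixarc M) (mob_fixarc (\adj M)).
Proof.
move=> det1 [y|//]; rewrite mob_fixarcS; case: ifP => [arc_y | out_y].
  have den_neq0 := fixarc_den det1 arc_y.
  by rewrite mobS // mob_fixarcS fixarc_adj fixarc_mobR // -mobS // mob_adjK.
by rewrite mob_fixarcS fixarc_adj out_y.
Qed.

Lemma mob_fixarc_bij M : \det M = 1 -> bijective (mob_fixarc M).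
Proof.
move=> det1; exists (mob_fixarc (\adj M)); first exact: mob_fixarcK.
by rewrite -{2}(adj2K M); apply: mob_fixarcK; rewrite det_adj2.
Qed.

Lemma piecewise_A_mob (A : {pred R}) (f : P1 R -> P1 R) :
  piecewise_A A f -> forall x, exists2 M, inSL2 A M & f x = mob M x.
Proof.
case=> [[|t s] [sorted_s [_ pieces]]] x.
  by have [M [SL_M fM]] := pieces; exists M.
have [i lt_i arc_x] := sorted_arcs_cover x sorted_s isT.
by have [M [SL_M fM]] := pieces i lt_i; exists M; last exact: fM.
Qed.

End Mobius.

Lemma exists_int_mul_lt (R : realType) (u K : R) : u != 0 -> exists k : int, k%:~R * u < K.
Proof.
move=> u_neq0; have u_gt0 : 0 < `|u| by rewrite normr_gt0.
have [m lt_m] : exists m : nat, `|K| / `|u| < m%:R.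
  by exists (Num.bound (`|K| / `|u|)); rewrite archi_boundP // divr_ge0.
rewrite ltr_pdivrMr // in lt_m; have := ler_norm (- K); rewrite normrN.
have [u_gt0' | u_lt0] := ltrP 0 u.
  by exists (- m%:Z); rewrite mulrNz -pmulrn mulNr (gtr0_norm u_gt0') in lt_m *; lra.
by exists m%:Z; rewrite -pmulrn (ler0_norm u_lt0) in lt_m *; lra.
Qed.

Section SL2.
Variables (R : realType) (A : {pred R}) (subringA : subring_closed A).
HB.instance Definition _ := GRing.isSubringClosed.Build R A subringA.
Implicit Types (M N : 'M[R]_2) (f : P1 R -> P1 R).

Lemma inSL2_mul M N : inSL2 A M -> inSL2 A N -> inSL2 A (M *m N).
Proof.
move=> [MA detM] [NA detN]; split; last by rewrite det_mulmx detM detN mulr1.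
by move=> i j; rewrite mxE rpred_sum // => k _; rewrite rpredM.
Qed.

Lemma inSL2_1 : inSL2 A 1%:M.
Proof. by split=> [i j|]; rewrite ?det1 // mxE rpred_nat. Qed.

Lemma inSL2_shiftmx n : n \in A -> inSL2 A (shiftmx n).
Proof.
move=> nA; split=> [i j|]; last by rewrite det2E !ent_mk2; ring.
by rewrite mxE; case: ifP; case: ifP; rewrite ?rpred0 ?rpred1.
Qed.

Lemma inSL2_opp M : inSL2 A M -> inSL2 A (- M).
Proof.
move=> [MA detM]; split=> [i j|]; first by rewrite mxE rpredN.
by rewrite det2E /ent11 /ent12 /ent21 /ent22 !mxE !mulrNN -detM det2E.
Qed.

Lemma in_HA_mob M : inSL2 A M -> ent21 M = 0 -> in_HA A (mob M).
Proof.
move=> SL_M c0; split; last by rewrite /= c0 eqxx.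
by split; [apply: mob_bij; case: SL_M | exists [::]; split=> //; split=> //; exists M].
Qed.

Lemma in_HA_shift n f : n \in A -> in_HA A f -> in_HA A (shiftP1 n \o f).
Proof.
move=> nA [[f_bij [s [sorted_s [bp_s pieces]]]] f_oo]; split; last by rewrite /= f_oo.
split.
  apply: bij_comp f_bij; exists (shiftP1 (- n)) => -[y|] //=; by rewrite ?addrK ?subrK.
have shift_piece M (P : P1 R -> Prop) : inSL2 A M -> (forall x, P x -> f x = mob M x) ->
    exists N, inSL2 A N /\ forall x, P x -> (shiftP1 n \o f) x = mob N x.
  move=> SL_M fM; exists (shiftmx n *m M); split; first exact: inSL2_mul (inSL2_shiftmx nA) SL_M.
  by move=> x Px; rewrite mob_shiftmxM /= fM.
exists s; split=> //; split=> //; case: s sorted_s bp_s pieces => [|t s] _ _.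
  case=> M [SL_M fM]; have [N [SL_N fN]] := shift_piece M (fun=> True) SL_M (fun x _ => fM x).
  by exists N; split=> // x; apply: fN.
by move=> pieces i lt_i; have [M [SL_M fM]] := pieces i lt_i; exact: shift_piece fM.
Qed.

Section HyperbolicArc.
Variable M : 'M[R]_2.
Hypotheses (SL_M : inSL2 A M) (c_gt0 : 0 < ent21 M) (hyperbolic_M : 2 < `|\tr M|).

Let det1 : \det M = 1. Proof. by case: SL_M. Qed.

Lemma fixpoly_factor :
  exists y1 y2, y1 < y2 /\ forall y, fixpoly M y = ent21 M * ((y - y1) * (y - y2)).
Proof.
have tr2_gt4 : 4 < \tr M ^+ 2.
  have t_gt2 := hyperbolic_M; rewrite -real_normK ?num_real //; nra.
set r := Num.sqrt (\tr M ^+ 2 - 4).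
have r_gt0 : 0 < r by rewrite sqrtr_gt0 subr_gt0.
have r2 : r ^+ 2 = \tr M ^+ 2 - 4 * \det M by rewrite det1 mulr1 sqr_sqrtr // subr_ge0 ltW.
set a := ent11 M; set b := ent12 M; set c := ent21 M; set d := ent22 M.
have c_neq0 : c != 0 by rewrite gt_eqF.
have b_r : b = (r ^+ 2 - (d - a) ^+ 2) / (4 * c).
  by rewrite r2 tr2E det2E -/a -/b -/c -/d; field.
exists ((a - d - r) / (2 * c)), ((a - d + r) / (2 * c)); split.
  by rewrite ltr_pM2r ?invr_gt0 ?mulr_gt0 //; lra.
by move=> y; rewrite /fixpoly -/a -/b -/c -/d b_r; field.
Qed.

Lemma in_HA_mob_fixarc : in_HA A (mob_fixarc M).
Proof.
have [y1 [y2 [lt_y12 fixpolyE]]] := fixpoly_factor.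
have fixarcE y : fixarc M y = (y1 <= y <= y2).
  rewrite /fixarc fixpolyE mulrA pmulr_rle0 ?mulr_gt0 //.
  by apply/idP/andP => [le0 | [le1 le2]]; [split; rewrite leNgt; apply/negP => lt; nra | nra].
have fixed_end y : fixpoly M y = 0 -> mob M (Some y) = Some y.
  move=> fix0; apply: (mob_fixpoly0 _ fix0); apply: (fixarc_den det1).
  by rewrite /fixarc fix0 mulr0.
have [fixed1 fixed2] : mob M (Some y1) = Some y1 /\ mob M (Some y2) = Some y2.
  by split; apply: fixed_end; rewrite fixpolyE !subrr ?mul0r ?mulr0.
split=> //; split; first exact: mob_fixarc_bij.
exists [:: Some y1; Some y2]; split; first by rewrite /= lt_y12.
split.
  move=> t; rewrite !inE => /orP [] /eqP ->; exists M; split=> //; split=> //.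
move=> [|[|//]] _ /=.
  exists M; split=> // -[y|]; rewrite in_arc_lt // => y_in.
  by rewrite mob_fixarcS fixarcE -!P1leSS y_in.
exists 1%:M; split; first exact: inSL2_1.
move=> [y|] //; rewrite mob1 in_arc_gt // !P1leSS => y_out.
rewrite mob_fixarcS fixarcE; case: ifP => // /andP [le1 le2].
case/orP: y_out => [le2' | le1'].
  by have -> : y = y2 by apply/le_anti; rewrite le2 le2'.
by have -> : y = y1 by apply/le_anti; rewrite le1 le1'.
Qed.

End HyperbolicArc.

Lemma HA_orbit_mob_lower_left_gt0 M p :
  inSL2 A M -> 0 < ent21 M -> mob_den M p != 0 ->
  exists f, in_HA A f /\ f (Some p) = mob M (Some p).
Proof.
move=> SL_M c_gt0 den_neq0.
have [k k_lt] := exists_int_mul_lt (- fixpoly M p) den_neq0.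
set n : R := k%:~R; have nA : n \in A := rpred_int _ k.
set N := shiftmx (- n) *m M.
have SL_N : inSL2 A N by apply: inSL2_mul SL_M; apply: inSL2_shiftmx; rewrite rpredN.
have M_N : M = shiftmx n *m N by rewrite mulmxA shiftmx_add subrr shiftmx0 mul1mx.
have c_N : ent21 N = ent21 M by rewrite /N shiftmxM ent_mk2.
have p_arc : ent21 N * fixpoly N p < 0.
  by rewrite c_N /N fixpoly_shiftmxM pmulr_rlt0 // mulNr opprK; lra.
have hyperbolic_N := hyperbolic_of_fixpoly (proj2 SL_N) p_arc.
exists (shiftP1 n \o mob_fixarc N); split.
  by apply: in_HA_shift nA _; apply: in_HA_mob_fixarc; rewrite ?c_N.
by rewrite M_N mob_shiftmxM /= /fixarc (ltW p_arc).
Qed.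

Lemma PSL2_orbit_sub_HA_orbit M p : inSL2 A M ->
  mob M (Some p) = None \/ exists f, in_HA A f /\ f (Some p) = mob M (Some p).
Proof.
move=> SL_M; have [den0 | den_neq0] := eqVneq (mob_den M p) 0.
  by left; rewrite /= -/(mob_den M p) den0 eqxx.
right; case: (ltrgtP (ent21 M) 0) => [c_lt0 | c_gt0 | c0].
- have [|||f [HA_f fp]] := @HA_orbit_mob_lower_left_gt0 (- M) p.
  + exact: inSL2_opp.
  + by rewrite /ent21 mxE oppr_gt0.
  + by rewrite /mob_den /ent21 /ent22 !mxE mulNr -opprD oppr_eq0.
  by exists f; rewrite fp mob_opp.
- exact: HA_orbit_mob_lower_left_gt0.
- by exists (mob M); split=> //; apply: in_HA_mob.
Qed.

End SL2.

Theorem proposition6 (R : realType) (A : {pred R}) (hA : subring_closed A) :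
  (forall p : R, forall M : 'M[R]_2, inSL2 A M ->
     mob M (Some p) = None \/
     exists f : P1 R -> P1 R, in_HA A f /\ f (Some p) = mob M (Some p))
  /\
  (forall x y : R,
     (exists M : 'M[R]_2, inSL2 A M /\ mob M (Some x) = Some y) <->
     (exists f : P1 R -> P1 R, in_HA A f /\ f (Some x) = Some y)).
Proof.
split=> [p M | x y]; first exact: PSL2_orbit_sub_HA_orbit.
split=> [[M [SL_M Mx]] | [f [HA_f fx]]].
  have [|[f [HA_f fx]]] := PSL2_orbit_sub_HA_orbit hA x SL_M; first by rewrite Mx.
  by exists f; rewrite fx Mx.
have [M SL_M fM] := piecewise_A_mob HA_f.1.2 (Some x).
by exists M; rewrite -fM.
Qed.
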